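(* Let $p\in k^\times$, $A_p=k\langle x_1,x_2\rangle/(x_2x_1-px_1x_2)$, and $K$ a Hopf algebra with antipode $S$ such that $A_p$ is a right $K$-comodule algebra via $\rho(x_i)=x_1\otimes y_{1i}+x_2\otimes y_{2i}$. If $S^2=\mathrm{Id}_K$, then $$y_{21}y_{11}=p^{-1}y_{11}y_{21},\quad y_{22}y_{12}=p^{-1}y_{12}y_{22},\quad py_{21}y_{12}=p^{-1}y_{12}y_{21},\quad y_{22}y_{11}=y_{11}y_{22}.$$
   Context: Here $S$ is bijective since $S^2=\mathrm{Id}$. The homological codeterminant ${\sf D}$ of the coaction is the grouplike element with $\rho^!(x_1^*x_2^* )={\sf D}\otimes x_1^*x_2^*$, where $\rho^!(x_i^* )=\sum_s y_{is}\otimes x_s^*$ is the induced left coaction on the Ext-algebra $E=k\langle x_1^*,x_2^*\rangle/(x_2^*x_1^*+p^{-1}x_1^*x_2^*,(x_1^* )^2,(x_2^* )^2)$. *)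

From HB Require Import structures.
From mathcomp Require Import all_boot all_order all_algebra.
Set Implicit Arguments.
Unset Strict Implicit.
Unset Printing Implicit Defensive.
Import GRing.Theory.
Local Open Scope ring_scope.

Definition i1 : 'I_2 := ord0.
Definition i2 : 'I_2 := ord_max.

Section HopfDefs.
Variables (k : fieldType) (K : algType k).

(* ---------- tensor products K (x) K and K (x) K (x) K ----------
   An element of K (x) K is represented by a formal sum  sum_i a_i (x) b_i,
   i.e. a list of pairs.  Two formal sums denote the same tensor iff every
   bilinear form K x K -> k takes the same value on them (over a field,
   (V (x) W)^* = Bil(V x W, k) separates points). *)

Definition bilinear_form (f : K -> K -> k) : Prop :=
  (forall (a : k) x x' z, f (a *: x + x') z = a * f x z + f x' z) /\
  (forall (a : k) x z z', f x (a *: z + z') = a * f x z + f x z').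

Definition trilinear_form (f : K -> K -> K -> k) : Prop :=
  (forall (a : k) x x' z w, f (a *: x + x') z w = a * f x z w + f x' z w) /\
  (forall (a : k) x z z' w, f x (a *: z + z') w = a * f x z w + f x z' w) /\
  (forall (a : k) x z w w', f x z (a *: w + w') = a * f x z w + f x z w').

Definition teq2 (s t : seq (K * K)) : Prop :=
  forall f, bilinear_form f ->
    \sum_(u <- s) f u.1 u.2 = \sum_(u <- t) f u.1 u.2.

Definition teq3 (s t : seq (K * K * K)) : Prop :=
  forall f, trilinear_form f ->
    \sum_(u <- s) f u.1.1 u.1.2 u.2 = \sum_(u <- t) f u.1.1 u.1.2 u.2.

(* ---------- Hopf algebra structure on the k-algebra K ----------
   Delta x is a (representative of) the coproduct of x in K (x) K. *)
Definition is_hopf_algebra (Delta : K -> seq (K * K)) (eps : K -> k)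
    (S : K -> K) : Prop :=
  (forall (a : k) x z, teq2 (Delta (a *: x + z))
        ([seq (a *: u.1, u.2) | u <- Delta x] ++ Delta z)) /\
  teq2 (Delta 1) [:: (1, 1)] /\
  (forall x z, teq2 (Delta (x * z))
        [seq (u.1 * v.1, u.2 * v.2) | u <- Delta x, v <- Delta z]) /\
  (forall (a : k) x z, eps (a *: x + z) = a * eps x + eps z) /\
  eps 1 = 1 /\
  (forall x z, eps (x * z) = eps x * eps z) /\
  (forall x, teq3 [seq (v.1, v.2, u.2) | u <- Delta x, v <- Delta u.1]
                  [seq (u.1, v.1, v.2) | u <- Delta x, v <- Delta u.2]) /\
  (forall x, \sum_(u <- Delta x) eps u.1 *: u.2 = x) /\
  (forall x, \sum_(u <- Delta x) eps u.2 *: u.1 = x) /\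
  (forall (a : k) x z, S (a *: x + z) = a *: S x + S z) /\
  (forall x, \sum_(u <- Delta x) S u.1 * u.2 = (eps x)%:A) /\
  (forall x, \sum_(u <- Delta x) u.1 * S u.2 = (eps x)%:A).

(* ---------- the free algebra k<x1,x2> (x) K = K<x1,x2> ----------
   Noncommutative polynomials in x1, x2 with coefficients in K, as formal
   sums of (word, coefficient); words are sequences of indices in 'I_2. *)
Definition ncpoly := seq (seq 'I_2 * K).
Definition ncmul (f g : ncpoly) : ncpoly :=
  [seq (u.1 ++ v.1, u.2 * v.2) | u <- f, v <- g].
Definition ncscale (c : K) (f : ncpoly) : ncpoly := [seq (u.1, c * u.2) | u <- f].
Definition nccoef (f : ncpoly) (w : seq 'I_2) : K := \sum_(u <- f | u.1 == w) u.2.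
Definition ncgen (i : 'I_2) : ncpoly := [:: ([:: i], 1)].

Definition Ap_rel (p : k) : ncpoly :=
  ncmul (ncgen i2) (ncgen i1) ++ ncscale (- p%:A) (ncmul (ncgen i1) (ncgen i2)).

(* f lies in the two-sided ideal of K<x1,x2> generated by x2x1 - p x1x2,
   i.e. f = 0 in A_p (x) K = K<x1,x2>/(x2x1 - p x1x2). *)
Definition in_Ap_ideal (p : k) (f : ncpoly) : Prop :=
  exists s : seq (ncpoly * ncpoly), forall w,
    nccoef f w = nccoef (flatten [seq ncmul (ncmul t.1 (Ap_rel p)) t.2 | t <- s]) w.

Definition rho_gen (y : 'I_2 -> 'I_2 -> K) (i : 'I_2) : ncpoly :=
  [:: ([:: i1], y i1 i); ([:: i2], y i2 i)].

(* A_p is a right K-comodule algebra via rho: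
   - rho extends to an algebra map A_p -> A_p (x) K, i.e. the images of the
     generators satisfy the defining relation in A_p (x) K;
   - coassociativity and counitality (checked on the generators x1, x2, which
     suffices since all maps involved are algebra maps; as x1, x2 are linearly
     independent in A_p they read Delta(y_ij) = sum_l y_il (x) y_lj and
     eps(y_ij) = delta_ij). *)
Definition is_Ap_comodule_algebra (p : k) (Delta : K -> seq (K * K))
    (eps : K -> k) (y : 'I_2 -> 'I_2 -> K) : Prop :=
  in_Ap_ideal p (ncmul (rho_gen y i2) (rho_gen y i1)
                 ++ ncscale (- p%:A) (ncmul (rho_gen y i1) (rho_gen y i2))) /\
  (forall i j, teq2 (Delta (y i j)) [seq (y i l, y l j) | l : 'I_2]) /\
  (forall i j, eps (y i j) = (i == j)%:R).

End HopfDefs.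

(* Write q_lm = y_l1 y_m2 - p^-1 y_l2 y_m1 for the q-minors of y = (y_ij).  The
   coaction respects x2 x1 = p x1 x2 iff q_11 = q_22 = 0 and q_21 = -p^-1 D, where
   D = q_12 is the quantum determinant.  As Delta q_lm = sum_ij y_li y_mj (x) q_ij,
   D is grouplike, hence invertible with inverse S D; and y times its quantum
   adjugate y' is D, so S(y) = y' S(D).  Since S(y_ij S(D)) = D S(y_ij), applying S
   once more shows that S^2 = Id forces S(D) to commute with y_11, y_22 and to
   p^(+-2)-commute with y_12, y_21.  Substituting this into S(y) y = 1 gives the
   relations.
   Tensors in K (x) K are only known through k-valued bilinear forms; as linear
   functionals separate points (Zorn), that suffices to evaluate them with
   K-valued bilinear maps. *)

From HB Require Import structures.
From mathcomp Require Import all_boot all_order all_algebra.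
From mathcomp Require Import boolp classical_sets.
From mathcomp.algebra_tactics Require Import ring.
From mathcomp Require Import zify.
Import GRing.Theory.
Local Open Scope ring_scope.

Section LinearFunctionals.
Context {k : fieldType} {V : lmodType k}.
Local Open Scope classical_set_scope.

Definition subspace_set (W : set V) := forall a x y, W x -> W y -> W (a *: x + y).

Lemma exists_hyperplane_avoiding (v : V) : v != 0 ->
  exists A : set V, [/\ subspace_set A, ~ A v & forall x, exists t : k, A (x - t *: v)].
Proof.
move=> v0.
pose P := [set W : set V | subspace_set W /\ ~ W v].
have [A [[Acl Av] Amax]] : exists A, P A /\ forall B, A `<` B -> ~ P B.
  apply: Zorn_bigcup => F FP Ftot; split.
    move=> a x y [W1 FW1 W1x] [W2 FW2 W2y].
    have [W12|W21] := Ftot _ _ FW1 FW2.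
      by exists W2 => //; apply: (FP _ FW2).1 => //; apply: W12.
    by exists W1 => //; apply: (FP _ FW1).1 => //; apply: W21.
  by move=> [W FW Wv]; apply: (FP _ FW).2.
have A0 : A 0.
  have [[w Aw]|A_empty] := pselect (exists w, A w).
    by have := Acl (-1) w w Aw Aw; rewrite scaleN1r addNr.
  exfalso; apply: (Amax [set 0]); split.
  - by move=> w Aw; exfalso; apply: A_empty; exists w.
  - by move=> /(_ 0 erefl) A0; apply: A_empty; exists 0.
  - by move=> a _ _ -> ->; rewrite scaler0 addr0.
  - by move=> /= v0'; move: v0; rewrite -v0' eqxx.
exists A; split => // x.
have [Ax|nAx] := pselect (A x); first by exists 0; rewrite scale0r subr0.
(* A + kx is a strictly larger subspace, so by maximality it contains v *)
pose B := [set z | exists w s, A w /\ z = w + s *: x].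
have AB : A `<` B.
  split; first by move=> w Aw; exists w, 0; rewrite scale0r addr0.
  by move=> BA; apply: nAx; apply: BA; exists 0, 1; rewrite scale1r add0r.
have [[w [s [Aw vE]]]|nBv] := pselect (B v); last first.
  exfalso; apply: (Amax B AB); split => //.
  move=> a _ _ [w1 [s1 [Aw1 ->]]] [w2 [s2 [Aw2 ->]]].
  exists (a *: w1 + w2), (a * s1 + s2); split; first exact: Acl.
  by rewrite scalerDr scalerA scalerDl addrACA.
have s0 : s != 0.
  by apply/eqP => s0; apply: Av; rewrite vE s0 scale0r addr0.
exists s^-1.
have -> : x - s^-1 *: v = (- s^-1) *: w + 0.
  rewrite vE addr0 scalerDr scalerA mulVf // scale1r scaleNr.
  by rewrite opprD addrCA subrr addr0.
exact: Acl.
Qed.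

Lemma scalar_separates {v : V} : v != 0 -> exists lam : {scalar V}, lam v = 1.
Proof.
move=> /exists_hyperplane_avoiding[A [Acl Av Adec]].
have A0 : A 0 by have [t At] := Adec 0; have := Acl (-1) _ _ At At; rewrite scaleN1r addNr.
have coord_uniq x t t' : A (x - t *: v) -> A (x - t' *: v) -> t = t'.
  move=> At At'; apply: contrapT => /eqP; rewrite -subr_eq0 => tt'; apply: Av.
  have := Acl (t - t')^-1 _ _ (Acl (-1) _ _ At At') A0.
  by rewrite scaleN1r opprB addrA subrK -scalerBl addr0 scalerA mulVf // scale1r.
pose lam x := projT1 (cid (Adec x)).
have lamP x : A (x - lam x *: v) by rewrite /lam; case: cid.
have lam_scalar : scalar lam.
  move=> a x y; apply: (coord_uniq (a *: x + y)) (lamP _) _.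
  have := Acl a _ _ (lamP x) (lamP y).
  by rewrite scalerDl -scalerA scalerBr addrACA opprD.
exists (HB.pack_for {scalar V} lam (GRing.isLinear.Build k V k *%R lam lam_scalar)) => /=.
by apply: (coord_uniq v) (lamP v) _; rewrite scale1r subrr.
Qed.

Lemma scalar_ext (x y : V) : (forall lam : {scalar V}, lam x = lam y) -> x = y.
Proof.
move=> eq_lam; apply/eqP; rewrite -subr_eq0; apply/negPn/negP => nz.
have [lam lam1] := scalar_separates nz.
by have /eqP := eq_lam lam; rewrite -subr_eq0 -linearB lam1 oner_eq0.
Qed.

Lemma scaler_solve {a b : k} {u v : V} :
  a != 0 -> a *: u + b *: v = 0 -> u = (- b / a) *: v.
Proof.
move=> a0 /eqP; rewrite addr_eq0 => /eqP/(congr1 (fun w => a^-1 *: w)).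
by rewrite scalerA mulVf // scale1r -scaleNr scalerA mulrC.
Qed.

End LinearFunctionals.

Section TensorRepresentatives.
Context {k : fieldType} {K : algType k}.
Implicit Types (f : K -> K -> k) (s t : seq (K * K)).

Lemma bilinear_form_scalarl {f} : bilinear_form f -> forall z, scalar (f^~ z).
Proof. by move=> [fl _] z a x x'; apply: fl. Qed.

Lemma bilinear_form_scalarr {f} : bilinear_form f -> forall x, scalar (f x).
Proof. by move=> [_ fr] x a z z'; apply: fr. Qed.

Lemma bilinear_formBl {f} : bilinear_form f -> forall x x' z, f (x - x') z = f x z - f x' z.
Proof. by move=> fb x x' z; rewrite (zmod_morphism_linear (bilinear_form_scalarl fb z)). Qed.

Lemma bilinear_formZl {f} : bilinear_form f -> forall a x z, f (a *: x) z = a * f x z.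
Proof. by move=> fb a x z; rewrite (scalable_linear (bilinear_form_scalarl fb z)). Qed.

Lemma bilinear_formBr {f} : bilinear_form f -> forall x z z', f x (z - z') = f x z - f x z'.
Proof. by move=> fb x z z'; rewrite (zmod_morphism_linear (bilinear_form_scalarr fb x)). Qed.

Lemma bilinear_form0r {f} : bilinear_form f -> forall x, f x 0 = 0.
Proof. by move=> fb x; rewrite -[0 in LHS](subrr 0) bilinear_formBr // subrr. Qed.

Lemma bilinear_formZr {f} : bilinear_form f -> forall a x z, f x (a *: z) = a * f x z.
Proof. by move=> fb a x z; rewrite (scalable_linear (bilinear_form_scalarr fb x)). Qed.

Lemma teq2_bilinear {V : lmodType k} (g : K -> K -> V) {s t} : teq2 s t ->
    (forall z, linear (g^~ z)) -> (forall x, linear (g x)) ->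
  \sum_(u <- s) g u.1 u.2 = \sum_(u <- t) g u.1 u.2.
Proof.
move=> st gl gr; apply: scalar_ext => lam; rewrite !linear_sum.
by apply: (st (fun x z => lam (g x z))); split=> a *; rewrite ?gl ?gr linearP.
Qed.

Lemma teq2_mul {s1 t1 s2 t2} : teq2 s1 t1 -> teq2 s2 t2 ->
  teq2 [seq (u.1 * v.1, u.2 * v.2) | u <- s1, v <- s2]
       [seq (u.1 * v.1, u.2 * v.2) | u <- t1, v <- t2].
Proof.
move=> st1 st2 f [fl fr]; rewrite !big_allpairs_dep /=.
transitivity (\sum_(u <- s1) \sum_(v <- t2) f (u.1 * v.1) (u.2 * v.2)).
  apply: eq_bigr => u _; apply: (st2 (fun x z => f (u.1 * x) (u.2 * z))).
  by split=> a *; rewrite mulrDr -scalerAr ?fl ?fr.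
rewrite exchange_big [in RHS]exchange_big; apply: eq_bigr => v _.
apply: (st1 (fun x z => f (x * v.1) (z * v.2))).
by split=> a *; rewrite mulrDl -scalerAl ?fl ?fr.
Qed.

End TensorRepresentatives.

Lemma I2P (i : 'I_2) : i = i1 \/ i = i2.
Proof. by case: i => [[|[|//]] ?]; [left|right]; apply: val_inj. Qed.

Lemma sum_I2 (V : nmodType) (F : 'I_2 -> V) : \sum_(l < 2) F l = F i1 + F i2.
Proof. by rewrite big_ord_recl big_ord1; congr (_ + F _); apply: val_inj. Qed.

Lemma cat3_eq_sized (T : eqType) (u r v w : seq T) : size r = size w ->
  (u ++ r ++ v == w) = [&& u == [::], r == w & v == [::]].
Proof.
move=> srw; case: u => [|x u]; case: v => [|z v] /=; rewrite ?cats0 ?andbT ?andbF //.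
all: by apply/negbTE/eqP => /(congr1 size); rewrite /= !size_cat srw /=; lia.
Qed.

Section NoncommutativePolynomials.
Context {k : fieldType} {K : algType k}.

Lemma nccoef_cat (f g : ncpoly K) w : nccoef (f ++ g) w = nccoef f w + nccoef g w.
Proof. by rewrite /nccoef big_cat. Qed.

Lemma nccoef_sandwich (t1 R t2 : ncpoly K) w : all (fun r => size r.1 == size w) R ->
  nccoef (ncmul (ncmul t1 R) t2) w = nccoef t1 [::] * nccoef R w * nccoef t2 [::].
Proof.
move=> /allP homR; rewrite /nccoef /ncmul big_mkcond !big_allpairs_dep /=.
rewrite [X in X * _ * _]big_mkcond [X in _ * X * _]big_mkcond [X in _ * X]big_mkcond /=.
rewrite !big_distrl /=; apply: eq_bigr => u _.
rewrite [X in X * _]big_distrr big_distrl big_seq [in RHS]big_seq /=.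
apply: eq_bigr => r /homR /eqP homr; rewrite big_distrr; apply: eq_bigr => v _ /=.
rewrite -catA cat3_eq_sized //.
by case: eqP; case: eqP; case: eqP; rewrite ?mulr0 ?mul0r.
Qed.

Lemma Ap_ideal_deg2 (p : k) (F : ncpoly K) : in_Ap_ideal p F ->
  [/\ nccoef F [:: i1; i1] = 0, nccoef F [:: i2; i2] = 0 &
       nccoef F [:: i1; i2] = - p *: nccoef F [:: i2; i1]].
Proof.
case=> s Fs.
have coefF w : size w = 2 -> nccoef F w =
    \sum_(t <- s) nccoef t.1 [::] * nccoef (Ap_rel K p) w * nccoef t.2 [::].
  move=> sw; rewrite Fs; elim: s {Fs} => [|t s IHs]; first by rewrite /nccoef !big_nil.
  by rewrite /= nccoef_cat IHs big_cons nccoef_sandwich //= sw.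
have rel_coef w :
    nccoef (Ap_rel K p) w = nccoef [:: ([:: i2; i1], 1); ([:: i1; i2], - p%:A)] w.
  by rewrite /nccoef /= !big_cons big_nil !mulr1.
have sum0 : forall w, size w = 2 -> nccoef (Ap_rel K p) w = 0 -> nccoef F w = 0.
  by move=> w sw r0; rewrite coefF // r0 big1 // => t _; rewrite mulr0 mul0r.
split; try by apply: sum0; rewrite // rel_coef /nccoef /= !big_cons big_nil.
rewrite !coefF // !rel_coef /nccoef /= !big_cons !big_nil /= !addr0.
rewrite scaler_sumr; apply: eq_bigr => t _.
by rewrite mulr1 mulrN mulNr mulr_algr -scalerAl scaleNr.
Qed.

Lemma nccoef_ncscale c (f : ncpoly K) w : nccoef (ncscale c f) w = c * nccoef f w.
Proof. by rewrite /nccoef big_map mulr_sumr. Qed.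

Lemma nccoef_rho_gen2 (y : 'I_2 -> 'I_2 -> K) i j l m :
  nccoef (ncmul (rho_gen y i) (rho_gen y j)) [:: l; m] = y l i * y m j.
Proof.
rewrite /nccoef /= !big_cons big_nil /=.
by case: (I2P l) => ->; case: (I2P m) => -> /=; rewrite ?addr0 ?add0r.
Qed.

End NoncommutativePolynomials.

Section QuantumMinors.
Context {k : fieldType} {K : algType k}.

Definition qminor (p : k) (y : 'I_2 -> 'I_2 -> K) (l m : 'I_2) : K :=
  y l i1 * y m i2 - p^-1 *: (y l i2 * y m i1).

Definition qdet p y := qminor p y i1 i2.

Lemma comodule_qminor {p : k} {y : 'I_2 -> 'I_2 -> K} : p != 0 ->
  in_Ap_ideal p (ncmul (rho_gen y i2) (rho_gen y i1)
                 ++ ncscale (- p%:A) (ncmul (rho_gen y i1) (rho_gen y i2))) ->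
  [/\ qminor p y i1 i1 = 0, qminor p y i2 i2 = 0 & qminor p y i2 i1 = - p^-1 *: qdet p y].
Proof.
set F := _ ++ _ => p0.
have coefF l m : nccoef F [:: l; m] = - p *: qminor p y l m.
  rewrite nccoef_cat nccoef_ncscale !nccoef_rho_gen2 mulNr mulr_algl /qminor.
  (* an identity between linear combinations of fixed vectors is a field
     identity after applying any linear functional *)
  by apply: scalar_ext => lam; rewrite !(linearD, linearN, linearB, linearZ) /=; field.
have Np0 : - p != 0 by rewrite oppr_eq0.
case/Ap_ideal_deg2; rewrite !coefF => /eqP q11 /eqP q22 /(scalerI Np0) q12.
rewrite !scaler_eq0 (negPf Np0) /= in q11 q22.
split; [exact/eqP | exact/eqP |].
by rewrite /qdet q12 scalerA mulNr mulrN mulVf // opprK scale1r.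
Qed.

End QuantumMinors.

Lemma matrix_inverse_unique (R : pzRingType) n (L U M : 'I_n -> 'I_n -> R) :
    (forall i j, \sum_l L i l * U l j = (i == j)%:R) ->
    (forall i j, \sum_l U i l * M l j = (i == j)%:R) ->
  forall i j, L i j = M i j.
Proof.
move=> LU UM i j; pose mx F : 'M[R]_n := \matrix_(i, j) F i j.
have mx1 F G : (forall i j, \sum_l F i l * G l j = (i == j)%:R) -> mx F *m mx G = 1%:M.
  move=> FG; apply/matrixP => i' j'; rewrite !mxE -FG.
  by apply: eq_bigr => l _; rewrite !mxE.
have LM : mx L = mx M by rewrite -[mx L]mulmx1 -(mx1 _ _ UM) mulmxA mx1 // mul1mx.
by have := congr1 (fun A : 'M_n => A i j) LM; rewrite !mxE.
Qed.

Section HopfAlgebra.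
Context {k : fieldType} {K : algType k}.
Context {Delta : K -> seq (K * K)} {eps : K -> k} {S : K -> K}.
Hypothesis hopf : is_hopf_algebra Delta eps S.

Lemma Delta_linear a x z :
  teq2 (Delta (a *: x + z)) ([seq (a *: u.1, u.2) | u <- Delta x] ++ Delta z).
Proof. by case: hopf. Qed.

Lemma Delta1 : teq2 (Delta 1) [:: (1, 1)].
Proof. by case: hopf => _ []. Qed.

Lemma Delta_mul x z :
  teq2 (Delta (x * z)) [seq (u.1 * v.1, u.2 * v.2) | u <- Delta x, v <- Delta z].
Proof. by case: hopf => _ [_ []]. Qed.

Lemma eps_scalar : scalar eps.
Proof. by case: hopf => _ [_ [_ []]]. Qed.

Lemma eps1 : eps 1 = 1.
Proof. by case: hopf => _ [_ [_ [_ []]]]. Qed.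

Lemma eps_mul : {morph eps : x z / x * z}.
Proof. by case: hopf => _ [_ [_ [_ [_ []]]]]. Qed.

Lemma antipode_linear : linear S.
Proof. by case: hopf => _ [_ [_ [_ [_ [_ [_ [_ [_ []]]]]]]]]. Qed.

Lemma antipodeL x : \sum_(u <- Delta x) S u.1 * u.2 = (eps x)%:A.
Proof. by case: hopf => _ [_ [_ [_ [_ [_ [_ [_ [_ [_ []]]]]]]]]]. Qed.

Lemma antipodeR x : \sum_(u <- Delta x) u.1 * S u.2 = (eps x)%:A.
Proof. by case: hopf => _ [_ [_ [_ [_ [_ [_ [_ [_ [_ [_ ?]]]]]]]]]]. Qed.

Lemma antipodeL_teq2 {x t} : teq2 (Delta x) t -> \sum_(u <- t) S u.1 * u.2 = (eps x)%:A.
Proof.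
move=> xt; rewrite -antipodeL; symmetry.
apply: (teq2_bilinear (fun a b => S a * b) xt) => [z a x1 x2|x1 a z1 z2] /=.
  by rewrite antipode_linear mulrDl scalerAl.
by rewrite mulrDr scalerAr.
Qed.

Lemma antipodeR_teq2 {x t} : teq2 (Delta x) t -> \sum_(u <- t) u.1 * S u.2 = (eps x)%:A.
Proof.
move=> xt; rewrite -antipodeR; symmetry.
apply: (teq2_bilinear (fun a b => a * S b) xt) => [z a x1 x2|x1 a z1 z2] /=.
  by rewrite mulrDl scalerAl.
by rewrite antipode_linear mulrDr scalerAr.
Qed.

Definition grouplike g : Prop := teq2 (Delta g) [:: (g, g)] /\ eps g = 1.

Definition multiplicative_matrix {n} (y : 'I_n -> 'I_n -> K) : Prop :=
  (forall i j, teq2 (Delta (y i j)) [seq (y i l, y l j) | l : 'I_n]) /\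
  (forall i j, eps (y i j) = (i == j)%:R).

Lemma grouplike_antipodeL {g} : grouplike g -> S g * g = 1.
Proof. by case=> gg g1; rewrite -[RHS]scale1r -g1 -(antipodeL_teq2 gg) big_seq1. Qed.

Lemma grouplike_antipodeR {g} : grouplike g -> g * S g = 1.
Proof. by case=> gg g1; rewrite -[RHS]scale1r -g1 -(antipodeR_teq2 gg) big_seq1. Qed.

Lemma multiplicative_matrix_antipodeL {n} {y : 'I_n -> 'I_n -> K} :
  multiplicative_matrix y -> forall i j, \sum_l S (y i l) * y l j = (i == j)%:R.
Proof.
case=> Dy ey i j; rewrite -scaler_nat -ey -(antipodeL_teq2 (Dy i j)).
by rewrite big_map big_enum.
Qed.

Lemma multiplicative_matrix_antipodeR {n} {y : 'I_n -> 'I_n -> K} :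
  multiplicative_matrix y -> forall i j, \sum_l y i l * S (y l j) = (i == j)%:R.
Proof.
case=> Dy ey i j; rewrite -scaler_nat -ey -(antipodeR_teq2 (Dy i j)).
by rewrite big_map big_enum.
Qed.

Lemma grouplike_antipode {g} : grouplike g -> grouplike (S g).
Proof.
move=> gl; have [gg g1] := gl; have gSg := grouplike_antipodeR gl.
split; last by have := congr1 eps gSg; rewrite eps_mul g1 mul1r eps1.
move=> f [fl fr]; pose f' x z := f (S g * x) (S g * z).
have f'b : bilinear_form f' by split=> a *; rewrite /f' mulrDr -scalerAr ?fl ?fr.
rewrite big_seq1; have := Delta_mul g (S g) f' f'b.
rewrite gSg (Delta1 f' f'b) big_seq1 /f' !mulr1 => ->.
rewrite (teq2_mul gg (fun _ _ => erefl) f' f'b) big_allpairs_dep big_seq1 /f' /=.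
by apply: eq_bigr => u _; rewrite !mulrA grouplike_antipodeL // !mul1r.
Qed.

Lemma multiplicative_matrix_mulr {n} {y : 'I_n -> 'I_n -> K} {g} :
  multiplicative_matrix y -> grouplike g -> multiplicative_matrix (fun i j => y i j * g).
Proof.
case=> Dy ey [gg g1]; split=> i j; last by rewrite eps_mul ey g1 mulr1.
move=> f fb; rewrite (Delta_mul _ _ f fb) (teq2_mul (Dy i j) gg f fb).
by rewrite big_allpairs_dep !big_map; apply: eq_bigr => l _; rewrite big_seq1.
Qed.

Lemma antipode_mulr_antipode n (y : 'I_n -> 'I_n -> K) g :
    multiplicative_matrix y -> grouplike g ->
  forall i j, S (y i j * S g) = g * S (y i j).
Proof.
move=> my gl i j; symmetry.
apply: (@matrix_inverse_unique _ _ (fun i j => g * S (y i j)) (fun i j => y i j * S g)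
  (fun i j => S (y i j * S g))) => {}i {}j /=.
  transitivity (g * (\sum_l S (y i l) * y l j) * S g).
    by rewrite mulr_sumr mulr_suml; apply: eq_bigr => l _; rewrite !mulrA.
  by rewrite multiplicative_matrix_antipodeL // mulr_natr mulrnAl grouplike_antipodeR.
exact: (multiplicative_matrix_antipodeR
  (multiplicative_matrix_mulr my (grouplike_antipode gl))).
Qed.

Lemma antipode_mulr_adj {n} {y : 'I_n -> 'I_n -> K} (adj : 'I_n -> 'I_n -> K) d :
    multiplicative_matrix y -> (forall i j, \sum_l y i l * adj l j = (i == j)%:R * d) ->
  forall i j, S (y i j) * d = adj i j.
Proof.
move=> my yadj i j; pose mx F : 'M[K]_n := \matrix_(i, j) F i j.
have Sy_y : mx (fun i j => S (y i j)) *m mx y = 1%:M.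
  apply/matrixP => i' j'; rewrite !mxE -(multiplicative_matrix_antipodeL my).
  by apply: eq_bigr => l _; rewrite !mxE.
have y_adj : mx y *m mx adj = d%:M.
  apply/matrixP => i' j'; rewrite !mxE -mulr_natl -yadj.
  by apply: eq_bigr => l _; rewrite !mxE.
have := congr1 (mulmx (mx (fun i j => S (y i j)))) y_adj.
rewrite mulmxA Sy_y mul1mx -diag_const_mx mul_mx_diag => /matrixP/(_ i j).
by rewrite !mxE.
Qed.

Lemma antipode_involutive_comm {n} {y : 'I_n -> 'I_n -> K} {g} {c c' : k} {i j i' j'} :
    S (y i j) = c *: (y i' j' * S g) -> S (y i' j') = c' *: (y i j * S g) ->
    multiplicative_matrix y -> grouplike g -> (forall x, S (S x) = x) ->
  S g * y i j = (c * c') *: (y i j * S g).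
Proof.
move=> Sy Sy' my gl SS.
have y_conj : y i j = (c * c') *: (g * y i j * S g).
  rewrite -[LHS]SS Sy (scalable_linear antipode_linear) antipode_mulr_antipode // Sy'.
  by rewrite /= -scalerAr scalerA mulrA.
by rewrite {1}y_conj -scalerAr !mulrA grouplike_antipodeL // mul1r.
Qed.

Section QuantumDeterminant.
Context {p : k} {y : 'I_2 -> 'I_2 -> K}.
Hypotheses (p0 : p != 0) (my : multiplicative_matrix y).
Hypotheses (qminor11 : qminor p y i1 i1 = 0) (qminor22 : qminor p y i2 i2 = 0).
Hypothesis qminor21 : qminor p y i2 i1 = - p^-1 *: qdet p y.

Lemma Delta_qminor l m : teq2 (Delta (qminor p y l m))
  [seq (y l i * y m j, qminor p y i j) | i <- enum 'I_2, j <- enum 'I_2].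
Proof.
move=> f fb; have Dy := my.1.
have -> : qminor p y l m = (- p^-1) *: (y l i2 * y m i1) + y l i1 * y m i2.
  by rewrite /qminor addrC scaleNr.
rewrite (Delta_linear _ _ _ f fb) big_cat big_map /=.
under eq_bigr do rewrite bilinear_formZl //.
rewrite -mulr_sumr !(Delta_mul _ _ f fb) !(teq2_mul (Dy _ _) (Dy _ _) f fb).
rewrite !big_allpairs_dep !big_map mulr_sumr -big_split; apply: eq_bigr => i _.
rewrite !big_map mulr_sumr -big_split; apply: eq_bigr => j _ /=.
by rewrite /qminor bilinear_formBr // bilinear_formZr // addrC mulNr.
Qed.

Lemma qdet_grouplike : grouplike (qdet p y).
Proof.
split.
  move=> f fb; rewrite (Delta_qminor i1 i2 f fb) big_allpairs_dep big_enum sum_I2.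
  rewrite !big_enum !sum_I2 /= qminor11 qminor22 qminor21 -/(qdet p y).
  rewrite !bilinear_form0r // add0r addr0 bilinear_formZr // big_seq1 /=.
  by rewrite {1}/qdet /qminor bilinear_formBl // bilinear_formZl // mulNr.
case: my => _ ey.
rewrite /qdet /qminor (zmod_morphism_linear eps_scalar) (scalable_linear eps_scalar).
by rewrite !eps_mul !ey /= mul0r mulr0 subr0 mulr1.
Qed.

Lemma antipode_generators : [/\ S (y i1 i1) = y i2 i2 * S (qdet p y),
  S (y i1 i2) = - p *: (y i1 i2 * S (qdet p y)),
  S (y i2 i1) = - p^-1 *: (y i2 i1 * S (qdet p y)) &
  S (y i2 i2) = y i1 i1 * S (qdet p y)].
Proof.
(* the quantum adjugate of y *)
pose adj (i j : 'I_2) := if i == j then (if i == i1 then y i2 i2 else y i1 i1)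
  else if i == i1 then - p *: y i1 i2 else - p^-1 *: y i2 i1.
have adj_col1 l : \sum_m y l m * adj m i1 = qminor p y l i2.
  by rewrite sum_I2 /adj /= /qminor -scalerAr scaleNr.
have adj_col2 l : \sum_m y l m * adj m i2 = - p *: qminor p y l i1.
  rewrite sum_I2 /adj /= /qminor -scalerAr scalerBr scalerA mulNr mulfV //.
  by rewrite scaleN1r opprK addrC.
have Sy_qdet : forall i j, S (y i j) * qdet p y = adj i j.
  apply: antipode_mulr_adj my _ => l j.
  case: (I2P j) => ->; rewrite ?adj_col1 ?adj_col2; case: (I2P l) => -> /=.
  - by rewrite mul1r.
  - by rewrite qminor22 mul0r.
  - by rewrite qminor11 scaler0 mul0r.
  - by rewrite qminor21 scalerA mulrNN mulfV // scale1r mul1r.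
have S_gen i j : S (y i j) = adj i j * S (qdet p y).
  by rewrite -Sy_qdet -mulrA (grouplike_antipodeR qdet_grouplike) mulr1.
by split; rewrite S_gen /adj /= ?scalerAl.
Qed.

Hypothesis S_involutive : forall x, S (S x) = x.

Lemma qdet_antipode_comm : [/\ S (qdet p y) * y i1 i1 = y i1 i1 * S (qdet p y),
  S (qdet p y) * y i1 i2 = (p * p) *: (y i1 i2 * S (qdet p y)),
  S (qdet p y) * y i2 i1 = (p^-1 * p^-1) *: (y i2 i1 * S (qdet p y)) &
  S (qdet p y) * y i2 i2 = y i2 i2 * S (qdet p y)].
Proof.
have [S11 S12 S21 S22] := antipode_generators.
have gD := qdet_grouplike.
rewrite -[y i2 i2 * _]scale1r in S11; rewrite -[y i1 i1 * _]scale1r in S22.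
rewrite !(antipode_involutive_comm S11 S22, antipode_involutive_comm S22 S11) //.
rewrite !(antipode_involutive_comm S12 S12, antipode_involutive_comm S21 S21) //.
by rewrite mulr1 !scale1r !mulrNN.
Qed.

Lemma quantum_plane_relations :
  [/\ y i2 i1 * y i1 i1 = p^-1 *: (y i1 i1 * y i2 i1),
      y i2 i2 * y i1 i2 = p^-1 *: (y i1 i2 * y i2 i2),
      p *: (y i2 i1 * y i1 i2) = p^-1 *: (y i1 i2 * y i2 i1) &
      y i2 i2 * y i1 i1 = y i1 i1 * y i2 i2].
Proof.
have [S11 S12 S21 S22] := antipode_generators.
have [C11 C12 C21 C22] := qdet_antipode_comm.
have cancel_SD x z : x * S (qdet p y) = z * S (qdet p y) -> x = z.
  move=> /(congr1 (fun u => u * qdet p y)).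
  by rewrite -!mulrA (grouplike_antipodeL qdet_grouplike) !mulr1.
have SyY i j : S (y i i1) * y i1 j + S (y i i2) * y i2 j = (i == j)%:R.
  by rewrite -(multiplicative_matrix_antipodeL my) sum_I2.
have E11 := SyY i1 i1; have E12 := SyY i1 i2; have E21 := SyY i2 i1.
rewrite /= S11 S12 S21 S22 mulr0n mulr1n in E11 E12 E21.
rewrite -?scalerAl -!mulrA ?C11 ?C12 ?C21 ?C22 -?scalerAr ?scalerA !mulrA in E11 E12 E21.
rewrite !scalerAl -!mulrDl in E11 E12 E21.
rewrite -(mul0r (S (qdet p y))) in E12 E21.
rewrite -(grouplike_antipodeR qdet_grouplike) in E11.
move: E11 E12 E21 => /cancel_SD E11 /cancel_SD E12 /cancel_SD E21.
rewrite -!scalerAl in E11 E12 E21.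
have pV0 : - p^-1 != 0 by rewrite oppr_eq0 invr_eq0.
have pp0 : p * p != 0 by rewrite mulf_neq0.
have da_ad : y i2 i2 * y i1 i1 = y i1 i1 * y i2 i2.
  apply: (addIr (- (p^-1 *: (y i1 i2 * y i2 i1)))).
  by rewrite -[RHS]E11 -scaleNr; congr (_ + _ *: _); field.
split; last exact: da_ad.
- by rewrite (scaler_solve pV0 E21); congr (_ *: _); field; rewrite p0 oppr_eq0 oner_eq0.
- by rewrite (scaler_solve pp0 E12); congr (_ *: _); field.
apply: scalar_ext => lam; move: (congr1 lam qminor21); rewrite /qdet /qminor da_ad.
rewrite !(linearB, linearZ) /= => E.
by rewrite -(subrK (p^-1 * lam (y i1 i1 * y i2 i2)) (lam _)) E; field.
Qed.

End QuantumDeterminant.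

End HopfAlgebra.

Theorem lemma5p3 (k : fieldType) (K : algType k)
    (Delta : K -> seq (K * K)) (eps : K -> k) (S : K -> K)
    (p : k) (y : 'I_2 -> 'I_2 -> K) :
  p != 0 ->
  is_hopf_algebra Delta eps S ->
  is_Ap_comodule_algebra p Delta eps y ->
  (forall x, S (S x) = x) ->
  [/\ y i2 i1 * y i1 i1 = p^-1 *: (y i1 i1 * y i2 i1),
      y i2 i2 * y i1 i2 = p^-1 *: (y i1 i2 * y i2 i2),
      p *: (y i2 i1 * y i1 i2) = p^-1 *: (y i1 i2 * y i2 i1)
    & y i2 i2 * y i1 i1 = y i1 i1 * y i2 i2].
Proof.
move=> p0 hopf [rel [Dy ey]] S_involutive.
have [q11 q22 q21] := comodule_qminor p0 rel.
exact: (quantum_plane_relations hopf p0 (conj Dy ey) q11 q22 q21 S_involutive).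
Qed.
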